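(* Let $q=3^m$ with $m\ge1$. Then for every $i\in\{0,1,2\}$, $$\#\{x\in\mathbb{F}_q:\ \mathrm{Tr}_{\mathbb{F}_q/\mathbb{F}_3}(x)=i,\ \mathrm{Tr}_{\mathbb{F}_q/\mathbb{F}_3}(x^2)=0\}\ge\frac{q-6\sqrt q}{9}.$$
   Context: $\mathrm{Tr}_{\mathbb{F}_q/\mathbb{F}_3}$ is the absolute trace from $\mathbb{F}_q$ to $\mathbb{F}_3$. *)

From mathcomp Require Import all_boot all_order all_algebra all_field.
Set Implicit Arguments. Unset Strict Implicit. Unset Printing Implicit Defensive.
Import GRing.Theory Num.Theory.
Local Open Scope ring_scope.

(* Absolute trace Tr_{F_q/F_3}(x) = sum_{k<m} x^(3^k), for a finite field F
   of order q = 3^m; its value lies in the prime field F_3 = {0,1,2} of F. *)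
Definition abs_trace3 (F : finFieldType) (m : nat) (x : F) : F :=
  \sum_(k < m) x ^+ (3 ^ k).

(* Put u x = Tr x - i and v x = Tr (x^2); both take values in F_3, and we
   count the common zeros N of u and v.  Since every nonzero point of F_3^2
   lies on exactly one line through the origin, the zero counts of u, v, u + v
   and u - v add up to q + 3N.  The trace is balanced, so u has q/3 zeros.
   Each of v, u + v, u - v has the form g x = Tr (c x^2 + d x) + s with c != 0;
   as g (h + x) - g x is a nonconstant affine function of x for h != 0, the
   pairs with g x = g y number q + (q - 1) q/3.  Knowing the sum and the sum of
   squares of the three fibre sizes of g gives (q - 3 #{g = 0})^2 <= 4q, and
   adding the three resulting bounds yields 9N >= q - 6 sqrt q. *)

From mathcomp Require Import all_boot all_order all_algebra all_field.
From mathcomp Require Import zify ring.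
Import Order.TTheory GRing.Theory Num.Theory.
Set Implicit Arguments. Unset Strict Implicit. Unset Printing Implicit Defensive.
Local Open Scope ring_scope.

Lemma card_set_nat (T : finType) (P : pred T) : #|[set x | P x]| = (\sum_x P x)%N.
Proof. by rewrite -sum1dep_card big_mkcond. Qed.

Section Fibers.
Variables (T I : finType) (S : eqType) (e : I -> S) (g : T -> S).
Hypotheses (e_inj : injective e) (g_in_range : forall x, exists k, g x = e k).

Let sum_fiber_indicators x y :
  (\sum_k (g x == e k) * (g y == e k))%N = (g x == g y).
Proof.
have [k0 ->] := g_in_range x; rewrite (bigD1 k0) //= eqxx mul1n big1 ?addn0 1?eq_sym //.
by move=> k /negbTE; rewrite (inj_eq e_inj) eq_sym => ->.
Qed.

Lemma sum_card_fibers : (\sum_k #|[set x | g x == e k]|)%N = #|T|.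
Proof.
under eq_bigr do rewrite card_set_nat.
rewrite exchange_big -sum1_card; apply: eq_bigr => x _.
have := sum_fiber_indicators x x; rewrite eqxx /= => <-.
by apply: eq_bigr => k _; case: (g x == e k).
Qed.

Lemma sum_sqr_card_fibers :
  (\sum_k #|[set x | g x == e k]| ^ 2)%N = (\sum_x \sum_y (g x == g y))%N.
Proof.
transitivity (\sum_k \sum_x \sum_y (g x == e k) * (g y == e k))%N.
  apply: eq_bigr => k _; rewrite card_set_nat -mulnn big_distrl.
  by apply: eq_bigr => x _; rewrite big_distrr.
rewrite exchange_big; apply: eq_bigr => x _.
by rewrite exchange_big; apply: eq_bigr => y _.
Qed.

End Fibers.

Lemma sqr_deviation_le (R : numDomainType) (q c0 c1 c2 : nat) :
  (c0 + c1 + c2 = q)%N -> (3 * (c0 ^ 2 + c1 ^ 2 + c2 ^ 2) = q ^ 2 + 2 * q)%N ->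
  (q%:R - 3 * c0%:R) ^+ 2 <= 4 * q%:R :> R.
Proof.
move=> sum sqr; have {}sqr : 3 * (c0%:R ^+ 2 + c1%:R ^+ 2 + c2%:R ^+ 2) = q%:R ^+ 2 + 2 * q%:R :> R.
  by rewrite -!natrX -!natrD -!natrM -natrD sqr.
move: sqr; rewrite -subr_ge0 -sum !natrD => sqr.
have -> : 4 * (c0%:R + c1%:R + c2%:R) - (c0%:R + c1%:R + c2%:R - 3 * c0%:R) ^+ 2 =
    2 * ((c0%:R + c1%:R + c2%:R) ^+ 2 + 2 * (c0%:R + c1%:R + c2%:R)
         - 3 * (c0%:R ^+ 2 + c1%:R ^+ 2 + c2%:R ^+ 2)) + 3 * (c1%:R - c2%:R) ^+ 2 :> R.
  by ring.
rewrite sqr subrr mulr0 add0r mulr_ge0 ?ler0n //.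
by rewrite real_exprn_even_ge0 // rpredB ?realn.
Qed.

Lemma ler_2sqrtC (C : numClosedFieldType) (x y : C) :
  x \is Num.real -> 0 <= y -> x ^+ 2 <= 4 * y -> x <= 2 * sqrtC y.
Proof.
move=> xR y_ge0 x2_le; apply: le_trans (real_ler_norm xR) _.
have four : 2 ^+ 2 = 4 :> C by rewrite -natrX.
rewrite -(sqrCK (normr_ge0 x)) real_normK // -(sqrCK (ler0n C 2)) -sqrtCM;
  rewrite ?nnegrE ?four ?ler0n //.
by rewrite ler_sqrtC ?nnegrE ?real_exprn_even_ge0 ?mulr_ge0 ?ler0n.
Qed.

Lemma lines_count_lower_bound (R : numFieldType) (q N cu cv cp cm : nat) (s : R) :
  (cu + cv + cp + cm = q + 3 * N)%N -> (q = 3 * cu)%N ->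
  q%:R - 3 * cv%:R <= 2 * s -> q%:R - 3 * cp%:R <= 2 * s -> q%:R - 3 * cm%:R <= 2 * s ->
  (q%:R - 6 * s) / 9 <= N%:R.
Proof.
move=> lines q3 le_v le_p le_m.
have linesR : cu%:R + cv%:R + cp%:R + cm%:R = q%:R + 3 * N%:R :> R.
  by rewrite -natrM -!natrD lines.
have cmE : cm%:R = q%:R + 3 * N%:R - cu%:R - cv%:R - cp%:R :> R by rewrite -linesR; ring.
have q3R : q%:R = 3 * cu%:R :> R by rewrite q3 natrM.
rewrite ler_pdivrMr ?ltr0n // -subr_ge0.
have -> : N%:R * 9 - (q%:R - 6 * s) = (2 * s - (q%:R - 3 * cv%:R))
    + (2 * s - (q%:R - 3 * cp%:R)) + (2 * s - (q%:R - 3 * cm%:R)).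
  by rewrite cmE q3R; ring.
by apply: addr_ge0; [apply: addr_ge0|]; rewrite subr_ge0.
Qed.

Section Char3.
Variable F : finFieldType.
Hypothesis F3 : 3%N \in [pchar F].

Let pchar_exp3 k : [pchar F].-nat (3 ^ k)%N.
Proof. by rewrite (eq_pnat _ (pcharf_eq F3)) pnatX pnat_id. Qed.

Lemma cubeD (x y : F) : (x + y) ^+ 3 = x ^+ 3 + y ^+ 3.
Proof. exact: exprDn_pchar (pchar_exp3 1). Qed.

Lemma cubeN (x : F) : (- x) ^+ 3 = - x ^+ 3.
Proof. exact: exprNn_pchar (pchar_exp3 1). Qed.

Lemma natr_cube (k : nat) : (k%:R : F) ^+ 3 = k%:R.
Proof. by elim: k => [|k IHk]; rewrite ?expr0n // -addn1 natrD cubeD IHk expr1n. Qed.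

Lemma eqr_nat_char3 (j k : 'I_3) : ((j : nat)%:R == (k : nat)%:R :> F) = (j == k).
Proof.
wlog le_jk : j k / (j <= k)%N.
  by move=> hw; case/orP: (leq_total j k) => /hw //; rewrite eq_sym [k == j]eq_sym.
rewrite eq_sym -subr_eq0 -natrB // -(dvdn_pcharf F3).
apply/idP/eqP => [dvd_kj|->]; last by rewrite subnn dvdn0.
apply: ord_inj; have := ltn_ord k; case: (posnP (k - j)) => [|/dvdn_leq/(_ dvd_kj)]; lia.
Qed.

Lemma natr3_inj : injective (fun k : 'I_3 => (k : nat)%:R : F).
Proof. by move=> j k /eqP; rewrite eqr_nat_char3 => /eqP. Qed.

Lemma cube_fixed_natr3 (t : F) : t ^+ 3 = t -> exists k : 'I_3, t = (k : nat)%:R.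
Proof.
have three : 3%:R = 0 :> F by apply/eqP; rewrite -(dvdn_pcharf F3).
move=> t3; have : t * (t - 1) * (t - 2%:R) = 0.
  have -> : t * (t - 1) * (t - 2%:R) = t ^+ 3 - t + 3%:R * (t - t ^+ 2) by ring.
  by rewrite three mul0r addr0 t3 subrr.
move/eqP; rewrite !mulf_eq0 !subr_eq0 -orbA => /or3P[] /eqP ->.
- by exists ord0.
- by exists (@Ordinal 3 1 isT).
- by exists (@Ordinal 3 2 isT).
Qed.

Lemma card_lines_through_origin (T : finType) (u v : T -> F) :
  (forall x, u x ^+ 3 = u x) -> (forall x, v x ^+ 3 = v x) ->
  (#|[set x | u x == 0%R]| + #|[set x | v x == 0%R]|
     + #|[set x | (u x + v x)%R == 0%R]| + #|[set x | (u x - v x)%R == 0%R]|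
   = #|T| + 3 * #|[set x | (u x == 0%R) && (v x == 0%R)]|)%N.
Proof.
move=> u3 v3; rewrite !card_set_nat -!big_split /= -sum1_card big_distrr -big_split /=.
apply: eq_bigr => x _.
have [[j ->] [k ->]] := (cube_fixed_natr3 (u3 x), cube_fixed_natr3 (v3 x)).
rewrite subr_eq0 eqr_nat_char3 -natrD -!(dvdn_pcharf F3).
by case: j k => [[|[|[|j]]] hj] [[|[|[|k]]] hk].
Qed.

Lemma abs_trace3D m : {morph abs_trace3 m : x y / (x + y : F)}.
Proof.
by move=> x y; rewrite -big_split; apply: eq_bigr => k _; apply: exprDn_pchar.
Qed.

Lemma abs_trace3N m (x : F) : abs_trace3 m (- x) = - abs_trace3 m x.
Proof. by rewrite -sumrN; apply: eq_bigr => k _; apply: exprNn_pchar. Qed.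

End Char3.

Section TraceCounting.
Variables (F : finFieldType) (m : nat).
Hypotheses (m_gt0 : (0 < m)%N) (cardF : #|F| = (3 ^ m)%N).
Local Notation Tr := (abs_trace3 m).

Let F3 : 3%N \in [pchar F] := card_finPcharP cardF isT.
Let cardF_pred : #|F| = (3 * 3 ^ m.-1)%N.
Proof. by rewrite cardF -expnS prednK. Qed.

Lemma abs_trace3_cube (x : F) : Tr x ^+ 3 = Tr x.
Proof.
rewrite /abs_trace3 -(prednK m_gt0) -[_ ^+ 3]/(pFrobenius_aut F3 _) rmorph_sum /=.
rewrite big_ord_recr big_ord_recl /= addrC; congr (_ + _).
  by rewrite pFrobenius_autE -exprM -expnSr prednK // -cardF expf_card.
by apply: eq_bigr => k _; rewrite pFrobenius_autE -exprM -expnSr.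
Qed.

Lemma card_abs_trace3_ker_le : (#|[set y : F | Tr y == 0%R]| <= 3 ^ m.-1)%N.
Proof.
pose p : {poly F} := \sum_(k < m) 'X^(3 ^ k).
have p_eval y : p.[y] = Tr y.
  by rewrite horner_sum; apply: eq_bigr => k _; rewrite hornerXn.
have size_p : size p = (3 ^ m.-1).+1.
  rewrite /p -(prednK m_gt0) big_ord_recr /= addrC size_polyDl size_polyXn //.
  apply: leq_ltn_trans (size_sum _ _ _) _.
  by rewrite ltnS; apply/bigmax_leqP => k _; rewrite size_polyXn ltn_exp2l.
have p_neq0 : p != 0 by rewrite -size_poly_eq0 size_p.
rewrite -ltnS -size_p cardE; apply: max_poly_roots p_neq0 _ (enum_uniq _).
by apply/allP => y; rewrite mem_enum inE /root p_eval.
Qed.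

Lemma card_abs_trace3_fiber (k : 'I_3) :
  #|[set y : F | Tr y == (k : nat)%:R]| = (3 ^ m.-1)%N.
Proof.
pose A (j : 'I_3) := [set y : F | Tr y == (j : nat)%:R].
have A_le j : (#|A j| <= 3 ^ m.-1)%N.
  apply: leq_trans _ card_abs_trace3_ker_le.
  have [->|[y0 Ay0]] := set_0Vmem (A j); first by rewrite cards0.
  rewrite -(card_imset _ (addIr (- y0))); apply/subset_leq_card/subsetP.
  move=> _ /imsetP[y Ay ->]; move: Ay Ay0.
  by rewrite !inE abs_trace3D // abs_trace3N // => /eqP-> /eqP->; rewrite subrr.
have := sum_card_fibers (natr3_inj F3) (fun y => cube_fixed_natr3 F3 (abs_trace3_cube y)).
rewrite (bigD1 k) //= cardF_pred => total.
have rest : (\sum_(j < 3 | j != k) #|A j| <= 2 * 3 ^ m.-1)%N.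
  apply: (@leq_trans (\sum_(j < 3 | j != k) 3 ^ m.-1)); first exact: leq_sum.
  by rewrite sum_nat_cond_const cardsE cardC1 card_ord.
have := leq_add (leqnn #|A k|) rest; rewrite total mulSn leq_add2r => ge_n.
by apply/eqP; rewrite eqn_leq A_le.
Qed.

Lemma card_abs_trace3_linear (c t : F) : c != 0 -> t ^+ 3 = t ->
  #|[set y | Tr (c * y) == t]| = (3 ^ m.-1)%N.
Proof.
move=> c_neq0 /(cube_fixed_natr3 F3) [k ->].
rewrite -(card_abs_trace3_fiber k) -[RHS](card_preimset _ (mulfI c_neq0)).
by apply: eq_card => y; rewrite !inE.
Qed.

Variables (c d s : F) (g : F -> F).
Hypotheses (c_neq0 : c != 0) (s_cube : s ^+ 3 = s).
Hypothesis gE : forall x, g x = Tr (c * x ^+ 2 + d * x) + s.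

Lemma quadratic_cube x : g x ^+ 3 = g x.
Proof. by rewrite gE cubeD // abs_trace3_cube s_cube. Qed.

Let quadratic_shift h y :
  (g (h + y) == g y) = (Tr (2%:R * c * h * y) == - Tr (c * h ^+ 2 + d * h)).
Proof.
rewrite !gE; have -> : c * (h + y) ^+ 2 + d * (h + y)
    = (c * h ^+ 2 + d * h) + 2%:R * c * h * y + (c * y ^+ 2 + d * y) by ring.
set A := c * h ^+ 2 + d * h; set C := c * y ^+ 2 + d * y.
rewrite !abs_trace3D // -subr_eq0 -[RHS]subr_eq0 opprK.
by congr (_ == 0); ring.
Qed.

Lemma quadratic_collisions :
  (\sum_x \sum_y (g x == g y))%N = (#|F| + #|F|.-1 * 3 ^ m.-1)%N.
Proof.
have two_neq0 : 2%:R != 0 :> F by rewrite -(dvdn_pcharf F3).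
rewrite exchange_big /=.
under eq_bigr => y _ do rewrite (reindex_inj (addIr y)) /=.
rewrite exchange_big /= (bigD1 0) //=.
under eq_bigr do rewrite add0r eqxx.
rewrite sum1_card; congr (_ + _)%N.
under eq_bigr => h h_neq0 do under eq_bigr do rewrite quadratic_shift.
rewrite (eq_bigr (fun=> 3 ^ m.-1)%N) => [|h h_neq0].
  by rewrite sum_nat_cond_const cardsE cardC1.
by rewrite -card_set_nat card_abs_trace3_linear ?mulf_neq0 // cubeN // abs_trace3_cube.
Qed.

Lemma quadratic_zeros_bound :
  #|F|%:R - 3 * #|[set x | g x == 0]|%:R <= 2 * sqrtC #|F|%:R :> algC.
Proof.
have g_range x := cube_fixed_natr3 F3 (quadratic_cube x).
have := sum_sqr_card_fibers (natr3_inj F3) g_range.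
have := sum_card_fibers (natr3_inj F3) g_range.
rewrite quadratic_collisions !big_ord_recr !big_ord0 /= !add0n mulr0n => sum sqr.
apply: ler_2sqrtC; rewrite ?rpredB ?rpredM ?realn ?ler0n //.
apply: sqr_deviation_le sum _; rewrite sqr cardF_pred.
have : (0 < 3 ^ m.-1)%N by rewrite expn_gt0.
move: (3 ^ m.-1)%N => n n_gt0; nia.
Qed.

End TraceCounting.

Theorem lemma6 (F : finFieldType) (m : nat) :
  (1 <= m)%N -> #|F| = (3 ^ m)%N ->
  forall i : 'I_3,
    ((#|F|%:R - 6 * sqrtC (#|F|%:R)) / 9 : algC)
      <= #|[set x : F | (abs_trace3 m x == (i : nat)%:R)
                        && (abs_trace3 m (x ^+ 2) == 0)]|%:R.
Proof.
move=> m_gt0 cardF i; set N := #|[set x : F | _]|.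
have F3 : 3%N \in [pchar F] := card_finPcharP cardF isT.
pose u (x : F) := abs_trace3 m x - (i : nat)%:R.
pose v (x : F) := abs_trace3 m (x ^+ 2).
have i_cube : (- (i : nat)%:R : F) ^+ 3 = - (i : nat)%:R by rewrite cubeN // natr_cube.
have u_cube x : u x ^+ 3 = u x by rewrite cubeD // i_cube abs_trace3_cube.
have v_cube x : v x ^+ 3 = v x by apply: abs_trace3_cube.
have -> : N = #|[set x | (u x == 0) && (v x == 0)]|.
  by apply: eq_card => x; rewrite !inE /u subr_eq0.
apply: lines_count_lower_bound (card_lines_through_origin F3 u_cube v_cube) _ _ _ _.
- rewrite cardF -(prednK m_gt0) expnS -(card_abs_trace3_fiber m_gt0 cardF i).
  by congr (3 * _)%N; apply: eq_card => x; rewrite !inE subr_eq0.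
- apply: (quadratic_zeros_bound (d := 0) m_gt0 cardF (oner_neq0 _) (expr0n _ _)) => x.
  by rewrite mul1r mul0r !addr0.
- apply: (quadratic_zeros_bound (d := 1) m_gt0 cardF (oner_neq0 _) i_cube) => x.
  by rewrite !mul1r abs_trace3D // /u /v; ring.
- apply: (quadratic_zeros_bound (c := -1) (d := 1) m_gt0 cardF _ i_cube) => [|x].
    by rewrite oppr_eq0 oner_eq0.
  by rewrite mulN1r mul1r abs_trace3D // abs_trace3N // /u /v; ring.
Qed.
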